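(* Let $X_1,\dots,X_n$ be i.i.d. copies of $X$ and $Y_1,\dots,Y_m$ be i.i.d. copies of $Y$. Let $\tau_{k|n}(\mathbf X)$ denote the lifetime of the $k$-out-of-$n$ system with component lifetimes $X_1,\dots,X_n$ and $\tau_{l|m}(\mathbf Y)$ the lifetime of the $l$-out-of-$m$ system with component lifetimes $Y_1,\dots,Y_m$. If $X\underset{c}{\prec}Y$ and $Y\le_{rhr}X$, then $\tau_{k|n}(\mathbf X)\underset{c}{\prec}\tau_{l|m}(\mathbf Y)$ for all $1\le k\le n$, $1\le l\le m$ with $k\le l$ and $m-l\le n-k$.
   Context: All random variables are non-negative and absolutely continuous with support $[0,\infty)$. For a random variable $W$: density $f_W$, cdf $F_W$, survival $\bar F_W=1-F_W$, hazard rate $r_W=f_W/\bar F_W$. $X\le_{rhr}Y$ means $F_Y(x)/F_X(x)$ is increasing in $x$. $X\underset{c}{\prec}Y$ means $r_X(x)/r_Y(x)$ is increasing in $x\ge0$. A $k$-out-of-$n$ system functions as long as at least $k$ of its $n$ components function. ''Increasing'' means non-decreasing. *)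

From HB Require Import structures.
From mathcomp Require Import all_boot all_order all_algebra.
From mathcomp Require Import all_classical all_reals all_analysis.
Set Implicit Arguments. Unset Strict Implicit. Unset Printing Implicit Defensive.
Import Order.TTheory GRing.Theory Num.Theory.
Import numFieldNormedType.Exports.
Local Open Scope classical_set_scope.
Local Open Scope ring_scope.

Section Lifetimes.
Variable R : realType.
Local Notation mu := (@lebesgue_measure R).

Definition lifetime_density (f : R -> R) : Prop :=
  measurable_fun setT f /\
  (forall x, 0 <= f x) /\
  (forall x, x < 0 -> f x = 0) /\
  mu.-integrable setT (EFin \o f) /\
  (\int[mu]_x (f x)%:E = 1)%E /\
  (forall a b, 0 <= a -> a < b -> (0 < \int[mu]_(x in `[a, b]) (f x)%:E)%E).

Definition cdf (f : R -> R) (x : R) : R :=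
  fine (\int[mu]_(t in `]-oo, x]) (f t)%:E)%E.

Definition surv (f : R -> R) (x : R) : R := 1 - cdf f x.

Definition hazard (g G : R -> R) (x : R) : R := g x / (1 - G x).

Definition rhr_le (fX fY : R -> R) : Prop :=
  forall x y, x <= y -> cdf fY x / cdf fX x <= cdf fY y / cdf fX y.

Definition c_ord_hazard (rX rY : R -> R) : Prop :=
  forall x y, 0 <= x -> x <= y -> rX x / rY x <= rX y / rY y.

Definition c_ord (fX fY : R -> R) : Prop :=
  c_ord_hazard (hazard fX (cdf fX)) (hazard fY (cdf fY)).

(* Lifetime of a k-out-of-n system with i.i.d. components of density f:
   the system has failed by time x iff at least n-k+1 components have failed,
   so its cdf is  sum_{j=n-k+1}^{n} C(n,j) F^j (1-F)^(n-j)  and its density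
   (the density of the (n-k+1)-th order statistic) is
   n C(n-1,k-1) F^(n-k) (1-F)^(k-1) f. *)
Definition sys_cdf (k n : nat) (f : R -> R) (x : R) : R :=
  \sum_(j < n.+1 | (n - k < j)%N)
     'C(n, j)%:R * cdf f x ^+ j * (1 - cdf f x) ^+ (n - j).

Definition sys_density (k n : nat) (f : R -> R) (x : R) : R :=
  (n * 'C(n.-1, k.-1))%:R * cdf f x ^+ (n - k) * (1 - cdf f x) ^+ k.-1 * f x.

Definition sys_hazard (k n : nat) (f : R -> R) : R -> R :=
  hazard (sys_density k n f) (sys_cdf k n f).

End Lifetimes.

(* Write k = k'+1, n = k'+1+a and T_{k',a}(u) = sum_{j<=a} C(k'+j, j) u^j.
   Then 1 - F_{k|n} = (1-F)^{k} T_{k',a}(F), so the system hazard is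
   r(x) times a constant times F(x)^a / T_{k',a}(F(x)). The ratio of the two
   system hazards is therefore r_X/r_Y times a constant times
   Phi(F, G) = F^a / T_{k',a}(F) * T_{l',b}(G) / G^b evaluated at
   (F_X(x), F_Y(x)), and it remains to see that this is nondecreasing in x.
   Since Y <=rhr X and F_Y -> 1, F_X <= F_Y and F_X/F_Y is nondecreasing.
   With lam = F_X(x)/F_Y(x) <= 1, we first move along the curve
   G |-> Phi(lam G, G): it is a ratio of two power series in G whose
   coefficient ratio is nondecreasing (this is where k' <= l' and b <= a
   enter), hence nondecreasing by a Chebyshev-type sum inequality. We then
   raise lam G to F_X(y), using that F^a / T_{k',a}(F) is nondecreasing. *)

From Pilot Require Import Defs.
From HB Require Import structures.
From mathcomp Require Import all_boot all_order all_algebra.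
From mathcomp Require Import all_classical all_reals all_analysis measurable_realfun.
From mathcomp Require Import ring lra zify.
Set Implicit Arguments. Unset Strict Implicit. Unset Printing Implicit Defensive.
Import Order.TTheory GRing.Theory Num.Theory.
Import numFieldNormedType.Exports.
Local Open Scope classical_set_scope.
Local Open Scope ring_scope.
Local Notation cdf := Defs.cdf.

Lemma leq_ratio_chain (u v : nat -> nat) :
  (forall t, 0 < u t)%N -> (forall t, 0 < v t)%N ->
  (forall t, u t * v t.+1 <= u t.+1 * v t)%N ->
  forall s t, (s <= t)%N -> (u s * v t <= u t * v s)%N.
Proof.
move=> u_gt0 v_gt0 step s t /subnKC <-; elim: (t - s)%N => [|d IH].
  by rewrite addn0 mulnC.
rewrite addnS -(@leq_pmul2r (u (s + d) * v (s + d))%N) ?muln_gt0 ?u_gt0 ?v_gt0 //.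
have -> : (u s * v (s + d).+1 * (u (s + d) * v (s + d)) =
           (u s * v (s + d)) * (u (s + d) * v (s + d).+1))%N by ring.
have -> : (u (s + d).+1 * v s * (u (s + d) * v (s + d)) =
           (u (s + d) * v s) * (u (s + d).+1 * v (s + d)))%N by ring.
exact: leq_mul.
Qed.

Lemma binomial_ratio_step k l c t : (k <= l)%N ->
  ('C(l + t, t) * 'C(k + (c + t.+1), c + t.+1) <=
   'C(l + t.+1, t.+1) * 'C(k + (c + t), c + t))%N.
Proof.
move=> kl; have eX := mul_bin_diag (l + t.+1) t.
have eY := mul_bin_diag (k + (c + t.+1)) (c + t).
rewrite !addnS /= in eX eY *.
set X0 := 'C(l + t, t) in eX *; set X1 := 'C((l + t).+1, t.+1) in eX *.
set Y0 := 'C(k + (c + t), c + t) in eY *.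
set Y1 := 'C((k + (c + t)).+1, (c + t).+1) in eY *.
rewrite -(@leq_pmul2r (t.+1 * (c + t).+1)) //.
have -> : (X0 * Y1 * (t.+1 * (c + t).+1) = X0 * Y0 * (t.+1 * (k + (c + t)).+1))%N.
  by transitivity (X0 * t.+1 * ((c + t).+1 * Y1))%N; [ring | rewrite -eY; ring].
have -> : (X1 * Y0 * (t.+1 * (c + t).+1) = X0 * Y0 * ((l + t).+1 * (c + t).+1))%N.
  by transitivity (Y0 * (c + t).+1 * (t.+1 * X1))%N; [ring | rewrite -eX; ring].
by apply: leq_mul => //; nia.
Qed.

Section binomial_sums.
Variable R : comPzRingType.
Implicit Types p q u : R.

Definition negbin_sum k a u : R := \sum_(j < a.+1) 'C(k + j, j)%:R * u ^+ j.

Definition binomial_head_sum K a p q : R :=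
  \sum_(j < a.+1) 'C(K + a, j)%:R * p ^+ j * q ^+ (K + a - j).

Lemma negbin_sum0 k u : negbin_sum k 0 u = 1.
Proof. by rewrite /negbin_sum big_ord1 /= addn0 bin0 expr0 mulr1. Qed.

Lemma binomial_head_sumS K a p q : p + q = 1 ->
  binomial_head_sum K a.+1 p q =
  binomial_head_sum K a p q + 'C(K + a, a.+1)%:R * p ^+ a.+1 * q ^+ K.
Proof.
move=> pq; set L := binomial_head_sum K a p q.
rewrite /binomial_head_sum big_ord_recl /=.
under eq_bigr => j _ do rewrite /bump /= add1n addnS binS subSS natrD !mulrDl.
rewrite big_split /= bin0 mul1r expr0 mul1r subn0 addnS.
have -> : \sum_(i < a.+1) 'C(K + a, i)%:R * p ^+ i.+1 * q ^+ (K + a - i) = p * L.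
  by rewrite /L /binomial_head_sum mulr_sumr; apply: eq_bigr => i _; rewrite exprS; ring.
have qL : q * L = q ^+ (K + a).+1 +
    \sum_(i < a) 'C(K + a, i.+1)%:R * p ^+ i.+1 * q ^+ (K + a - i).
  rewrite /L /binomial_head_sum big_ord_recl mulrDr bin0 mul1r expr0 mul1r subn0.
  rewrite -exprS; congr (_ + _); rewrite mulr_sumr; apply: eq_bigr => i _ /=.
  have iN : (i < K + a)%N by have := ltn_ord i; lia.
  by rewrite /bump /= add1n -[in RHS](subnSK iN) (exprS q); ring.
rewrite big_ord_recr /= addnK.
have splitL : L = p * L + q * L by rewrite -mulrDl pq mul1r.
by rewrite [in RHS]splitL qL; ring.
Qed.

Lemma binomial_head_sum_negbin k a p q : p + q = 1 ->
  binomial_head_sum k.+1 a p q = q ^+ k.+1 * negbin_sum k a p.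
Proof.
move=> pq; elim: a => [|a IH].
  by rewrite /binomial_head_sum /negbin_sum !big_ord1 /= !bin0 addn0 subn0 !mul1r expr0 mulr1.
rewrite binomial_head_sumS // IH /negbin_sum [in RHS]big_ord_recr /= mulrDr addSnnS.
by congr (_ + _); ring.
Qed.

Lemma binomial_tail_negbin k a p :
  1 - \sum_(j < (k.+1 + a).+1 | (k.+1 + a - k.+1 < j)%N)
        'C(k.+1 + a, j)%:R * p ^+ j * (1 - p) ^+ (k.+1 + a - j)
  = (1 - p) ^+ k.+1 * negbin_sum k a p.
Proof.
set N := (k.+1 + a)%N; set t := fun j : nat => 'C(N, j)%:R * p ^+ j * (1 - p) ^+ (N - j).
have total : \sum_(j < N.+1) t j = 1.
  rewrite -(expr1n _ N) -{1}(subrK p 1) exprDn.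
  by apply: eq_bigr => j _; rewrite /t -mulr_natl; ring.
rewrite -binomial_head_sum_negbin; last by rewrite addrC subrK.
rewrite -[X in X - _]total.
rewrite (bigID (fun j : 'I_N.+1 => (N - k.+1 < j)%N)) /= addrC addrK /N addKn.
rewrite (eq_bigl (fun j : 'I__ => (j < a.+1)%N)) => [|j]; last by rewrite -leqNgt.
by rewrite -(big_ord_widen _ t) // ltnS leq_addl.
Qed.

End binomial_sums.

Section ratio_monotonicity.
Variable R : realFieldType.
Implicit Types x y u : R.

Lemma ler_pdiv_cross (a b c d : R) : 0 < b -> 0 < d -> (a / b <= c / d) = (a * d <= c * b).
Proof. by move=> b_gt0 d_gt0; rewrite ler_pdivrMr // mulrAC ler_pdivlMr. Qed.

Lemma ler_expr_cross x y i j : 0 <= x -> x <= y -> (i <= j)%N ->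
  y ^+ i * x ^+ j <= x ^+ i * y ^+ j.
Proof.
move=> x_ge0 xy ij; rewrite -(subnKC ij) !exprD !mulrA [y ^+ i * _]mulrC.
apply: ler_wpM2l; first by rewrite mulr_ge0 ?exprn_ge0 // (le_trans x_ge0).
by apply: lerXn2r => //; rewrite nnegrE // (le_trans x_ge0).
Qed.

Lemma ler_sum_expr_ratio M (nn dd : nat -> R) x y : 0 <= x -> x <= y ->
  (forall i j, (i <= j)%N -> (j < M)%N -> nn i * dd j <= nn j * dd i) ->
  (\sum_(i < M) nn i * x ^+ i) * (\sum_(j < M) dd j * y ^+ j) <=
  (\sum_(i < M) nn i * y ^+ i) * (\sum_(j < M) dd j * x ^+ j).
Proof.
move=> x_ge0 xy coef_ratio; rewrite -subr_ge0.
pose t (i j : 'I_M) := nn i * dd j * (y ^+ i * x ^+ j - x ^+ i * y ^+ j).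
have -> : (\sum_(i < M) nn i * y ^+ i) * (\sum_(j < M) dd j * x ^+ j) -
    (\sum_(i < M) nn i * x ^+ i) * (\sum_(j < M) dd j * y ^+ j) =
    \sum_(i < M) \sum_(j < M) t i j.
  rewrite !big_distrlr /= -sumrB; apply: eq_bigr => i _.
  by rewrite -sumrB; apply: eq_bigr => j _; rewrite /t; ring.
(* symmetrize: the summand pairs (i, j) and (j, i) have a nonnegative sum *)
rewrite -(pmulr_rge0 _ (_ : 0 < 2%:R)) // mulr_natl mulr2n {2}exchange_big -big_split /=.
apply: sumr_ge0 => i _; rewrite -big_split; apply: sumr_ge0 => j _ /=.
have -> : t i j + t j i = (nn j * dd i - nn i * dd j) * (x ^+ i * y ^+ j - y ^+ i * x ^+ j).
  by rewrite /t; ring.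
case: (leqP i j) => ij.
  by rewrite mulr_ge0 // subr_ge0 ?coef_ratio ?ler_expr_cross.
apply: mulr_le0; rewrite subr_le0; first by rewrite coef_ratio // ltnW.
by rewrite mulrC [y ^+ i * _]mulrC ler_expr_cross // ltnW.
Qed.

Lemma negbin_sum_ge1 k a u : 0 <= u -> 1 <= negbin_sum k a u.
Proof.
move=> u_ge0; rewrite /negbin_sum big_ord_recl /= addn0 bin0 expr0 mulr1 lerDl.
by apply: sumr_ge0 => i _; rewrite mulr_ge0 ?exprn_ge0.
Qed.

Lemma negbin_sum_gt0 k a u : 0 <= u -> 0 < negbin_sum k a u.
Proof. by move/(negbin_sum_ge1 k a); apply: lt_le_trans. Qed.

Lemma expr_div_negbin_nondecreasing k a x y : 0 <= x -> x <= y ->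
  x ^+ a / negbin_sum k a x <= y ^+ a / negbin_sum k a y.
Proof.
move=> x_ge0 xy; have y_ge0 := le_trans x_ge0 xy.
rewrite ler_pdiv_cross ?negbin_sum_gt0 //.
have monomial (z : R) : \sum_(i < a.+1) (i == a :> nat)%:R * z ^+ i = z ^+ a.
  rewrite big_ord_recr /= eqxx mul1r big1 ?add0r // => i _.
  by rewrite (ltn_eqF (ltn_ord i)) mul0r.
rewrite -(monomial x) -(monomial y) /negbin_sum.
apply: (@ler_sum_expr_ratio a.+1 (fun i => (i == a :> nat)%:R) (fun j => 'C(k + j, j)%:R))
  => // i j ij ja.
case: eqP => [ia|_]; last by rewrite mul0r mulr_ge0.
have -> : j = a by apply/eqP; rewrite eqn_leq -ltnS ja -ia.
by rewrite ia eqxx.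
Qed.

Definition shifted_binomial (l c j : nat) : R :=
  if (c <= j)%N then 'C(l + (j - c), j - c)%:R else 0.

Lemma sum_shifted_binomial l c b x :
  \sum_(j < (c + b).+1) shifted_binomial l c j * x ^+ j = x ^+ c * negbin_sum l b x.
Proof.
rewrite -addnS big_split_ord /= big1 ?add0r => [|i _]; last first.
  by rewrite /shifted_binomial leqNgt ltn_ord mul0r.
rewrite /negbin_sum mulr_sumr; apply: eq_bigr => i _ /=.
by rewrite /shifted_binomial leq_addr addKn exprD; ring.
Qed.

Lemma shifted_binomial_ratio k l c i j : (k <= l)%N -> (i <= j)%N ->
  shifted_binomial l c i * 'C(k + j, j)%:R <= shifted_binomial l c j * 'C(k + i, i)%:R.
Proof.
move=> kl ij; rewrite /shifted_binomial.
case: (leqP c i) => ci; last by rewrite mul0r; case: ifP => _; rewrite mulr_ge0.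
rewrite (leq_trans ci ij) -!natrM ler_nat.
have [s [d [-> ->]]] : exists s d, i = (c + s)%N /\ j = (c + (s + d))%N.
  by exists (i - c)%N, (j - i)%N; split; lia.
rewrite !addKn.
apply: (leq_ratio_chain (u := fun t => 'C(l + t, t)) (v := fun t => 'C(k + (c + t), c + t))).
- by move=> t; rewrite bin_gt0 leq_addl.
- by move=> t; rewrite bin_gt0 leq_addl.
- by move=> t; exact: binomial_ratio_step.
- exact: leq_addr.
Qed.

Lemma negbin_ratio_scaled_nondecreasing k l a b lam x y :
  (k <= l)%N -> (b <= a)%N -> 0 <= lam -> lam <= 1 -> 0 <= x -> x <= y ->
  x ^+ (a - b) * negbin_sum l b x * negbin_sum k a (lam * y) <=
  y ^+ (a - b) * negbin_sum l b y * negbin_sum k a (lam * x).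
Proof.
move=> kl ba lam_ge0 lam_le1 x_ge0 xy.
have shifted z : \sum_(j < a.+1) shifted_binomial l (a - b) j * z ^+ j =
    z ^+ (a - b) * negbin_sum l b z.
  by rewrite -sum_shifted_binomial subnK.
have scaled z : \sum_(j < a.+1) ('C(k + j, j)%:R * lam ^+ j) * z ^+ j =
    negbin_sum k a (lam * z).
  by apply: eq_bigr => j _; rewrite exprMn mulrA.
rewrite -(shifted x) -(shifted y) -(scaled x) -(scaled y).
apply: (@ler_sum_expr_ratio a.+1 (shifted_binomial l (a - b))
  (fun j => 'C(k + j, j)%:R * lam ^+ j)) => // i j ij _.
rewrite !mulrA; apply: ler_pM; rewrite ?exprn_ge0 ?ler_wiXn2l //.
- by rewrite mulr_ge0 // /shifted_binomial; case: ifP.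
- exact: shifted_binomial_ratio.
Qed.

Definition sys_factor_ratio k a l b (F G : R) : R :=
  F ^+ a / negbin_sum k a F * (negbin_sum l b G / G ^+ b).

Lemma sys_factor_ratio_ge0 k a l b F G : 0 <= F -> 0 <= G ->
  0 <= sys_factor_ratio k a l b F G.
Proof.
move=> F_ge0 G_ge0.
by rewrite mulr_ge0 // divr_ge0 ?exprn_ge0 // ltW // negbin_sum_gt0.
Qed.

Lemma sys_factor_ratio_scaled k a l b lam G : (b <= a)%N -> 0 <= lam -> 0 < G ->
  sys_factor_ratio k a l b (lam * G) G =
  lam ^+ a * (G ^+ (a - b) * negbin_sum l b G / negbin_sum k a (lam * G)).
Proof.
move=> ba lam_ge0 G_gt0; rewrite /sys_factor_ratio exprMn.
rewrite -[in G ^+ a](subnK ba) exprD.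
have TlamG_neq0 : negbin_sum k a (lam * G) != 0.
  by rewrite gt_eqF // negbin_sum_gt0 // mulr_ge0 // ltW.
have Gb_neq0 : G ^+ b != 0 by rewrite expf_neq0 // gt_eqF.
by field; rewrite TlamG_neq0 Gb_neq0.
Qed.

Lemma sys_factor_ratio_nondecreasing k a l b F1 F2 G1 G2 :
  (k <= l)%N -> (b <= a)%N -> 0 <= F1 -> F1 <= F2 -> 0 <= G1 -> G1 <= G2 ->
  (0 < G1 -> F1 <= G1 /\ F1 * G2 <= F2 * G1) ->
  sys_factor_ratio k a l b F1 G1 <= sys_factor_ratio k a l b F2 G2.
Proof.
move=> kl ba F1_ge0 F12 G1_ge0 G12 FG.
have F2_ge0 := le_trans F1_ge0 F12; have G2_ge0 := le_trans G1_ge0 G12.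
have [G1_eq0|G1_gt0] := eqVneq G1 0; last first.
- have {}G1_gt0 : 0 < G1 by rewrite lt_neqAle eq_sym G1_gt0.
  have G2_gt0 := lt_le_trans G1_gt0 G12; have [F1G1 cross] := FG G1_gt0.
  pose lam := F1 / G1.
  have lam_ge0 : 0 <= lam by rewrite divr_ge0 // ltW.
  have lam_le1 : lam <= 1 by rewrite ler_pdivrMr // mul1r.
  apply: (@le_trans _ _ (sys_factor_ratio k a l b (lam * G2) G2)).
    rewrite -{1}(divfK (lt0r_neq0 G1_gt0) F1) -/lam !sys_factor_ratio_scaled //.
    have Tlam_gt0 z : 0 <= z -> 0 < negbin_sum k a (lam * z).
      by move=> z_ge0; apply: negbin_sum_gt0; apply: mulr_ge0.
    rewrite ler_wpM2l ?exprn_ge0 // ler_pdiv_cross ?Tlam_gt0 //.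
    exact: negbin_ratio_scaled_nondecreasing.
  rewrite ler_wpM2r ?divr_ge0 ?exprn_ge0 ?(ltW (negbin_sum_gt0 _ _ _)) //.
  apply: expr_div_negbin_nondecreasing; first exact: mulr_ge0.
  by rewrite /lam mulrAC ler_pdivrMr.
- (* G1 = 0: for b > 0 the left side vanishes because 0^-1 = 0 *)
  case: b ba => [|b] ba.
    rewrite /sys_factor_ratio !negbin_sum0 !expr0 !divr1 !mulr1.
    exact: expr_div_negbin_nondecreasing.
  rewrite {1}/sys_factor_ratio G1_eq0 expr0n invr0 !mulr0.
  exact: sys_factor_ratio_ge0.
Qed.

End ratio_monotonicity.

Section lifetime_density_cdf.
Variables (R : realType) (f : R -> R).
Hypothesis f_density : lifetime_density f.
Local Notation mu := (@lebesgue_measure R).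

Let mf : measurable_fun [set: R] (EFin \o f).
Proof. by case: f_density => f_meas _; exact/measurable_EFinP. Qed.

Lemma density_ge0 x : 0 <= f x.
Proof. by case: f_density => _ []. Qed.

Let integral_le1 (A : set R) : measurable A -> (\int[mu]_(x in A) (f x)%:E <= 1)%E.
Proof.
move=> mA; case: f_density => _ [_ [_ [_ [<- _]]]].
by apply: ge0_subset_integral => // x _; rewrite lee_fin density_ge0.
Qed.

Lemma cdfE x : (cdf f x)%:E = (\int[mu]_(t in `]-oo, x]) (f t)%:E)%E.
Proof.
rewrite /cdf fineK // ge0_fin_numE ?(le_lt_trans (integral_le1 _)) ?ltry //.
by apply: integral_ge0 => t _; rewrite lee_fin density_ge0.
Qed.

Lemma cdf_ge0 x : 0 <= cdf f x.
Proof. by rewrite -lee_fin cdfE; apply: integral_ge0 => t _; rewrite lee_fin density_ge0. Qed.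

Lemma cdf_le1 x : cdf f x <= 1.
Proof. by rewrite -lee_fin cdfE integral_le1. Qed.

Lemma cdf_nondecreasing : {homo cdf f : x y / x <= y}.
Proof.
move=> x y xy; rewrite -lee_fin !cdfE; apply: ge0_subset_integral => //.
- exact: measurable_funS mf.
- by move=> t _; rewrite lee_fin density_ge0.
- by move=> t /=; rewrite !in_itv /= => /le_trans; apply.
Qed.

Lemma cvg_cdf_nat : cdf f n%:R @[n --> \oo] --> (1 : R).
Proof.
apply: fine_cvg; pose g n := (EFin \o f) \_ `]-oo, n%:R].
have mg n : measurable_fun setT (g n).
  by apply/(measurable_restrictT _ _).1 => //; exact: measurable_funS mf.
have g_ge0 n x : setT x -> (0 <= g n x)%E.
  by move=> _; rewrite /g patchE; case: ifP => // _; rewrite lee_fin density_ge0.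
have g_nd x : setT x -> {homo g^~ x : n m / (n <= m)%N >-> (n <= m)%E}.
  move=> _ n m nm; rewrite /g !patchE; case: ifPn => xn; case: ifPn => xm //.
  - move: xn xm => /set_mem; rewrite /= !in_itv /= => xn /negP[]; apply/mem_set.
    by rewrite /= in_itv /= (le_trans xn) // ler_nat.
  - by rewrite lee_fin density_ge0.
have g_lim : (fun x => limn (g^~ x)) = EFin \o f.
  apply/funext => x; apply: lim_near_cst => //; near=> n.
  rewrite /g patchE ifT //; apply/mem_set; rewrite /= in_itv /=.
  by near: n; exact: nbhs_infty_ger.
have := @cvg_monotone_convergence _ _ _ mu _ measurableT _ mg g_ge0 g_nd.
rewrite g_lim; case: f_density => _ [_ [_ [_ [-> _]]]].
by under eq_fun do rewrite -integral_mkcond.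
Unshelve. all: by end_near. Qed.

Lemma cdf_exceeds c : c < 1 -> exists n : nat, c < cdf f n%:R.
Proof.
move=> c_lt1; have [N _ ltN] := @cvgr_gt _ _ _ _ _ _ cvg_cdf_nat _ c_lt1.
by exists N; exact: (ltN N (leqnn N)).
Qed.

Lemma hazard_ge0 x : 0 <= hazard f (cdf f) x.
Proof. by rewrite divr_ge0 ?density_ge0 // subr_ge0 cdf_le1. Qed.

End lifetime_density_cdf.

Lemma rhr_le_cdf_le (R : realType) (fX fY : R -> R) x :
  lifetime_density fX -> lifetime_density fY -> rhr_le fY fX ->
  0 < cdf fY x -> cdf fX x <= cdf fY x.
Proof.
move=> hX hY rhr Gx_gt0; rewrite leNgt; apply/negP => GF.
have Fx_gt0 := lt_trans Gx_gt0 GF.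
have [n Gn] : exists n : nat, cdf fY x / cdf fX x < cdf fY n%:R.
  by apply: cdf_exceeds; rewrite // ltr_pdivrMr // mul1r.
pose z := Order.max x n%:R.
have Gz : cdf fY x / cdf fX x < cdf fY z.
  by rewrite (lt_le_trans Gn) // cdf_nondecreasing // le_max lexx orbT.
have Gz_gt0 : 0 < cdf fY z by rewrite (le_lt_trans _ Gz) // divr_ge0 // ltW.
(* F / G is nondecreasing and F <= 1, so G stays below G x / F x to the right of x *)
have := rhr x z (_ : x <= z); rewrite ?le_max ?lexx // ler_pdiv_cross // => cross.
have := cdf_le1 hX z; move: Gz; rewrite ltr_pdivrMr //; nra.
Qed.

Lemma sys_hazardE (R : realType) (f : R -> R) k a x :
  sys_hazard k.+1 (k.+1 + a) f x = hazard f (cdf f) x *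
    (((k.+1 + a) * 'C(k + a, k))%:R * (cdf f x ^+ a / negbin_sum k a (cdf f x))).
Proof.
rewrite /sys_hazard /hazard /sys_cdf /sys_density binomial_tail_negbin addKn /=.
set F := cdf f x; set q := 1 - F; rewrite invfM.
have q_ratio : q ^+ k / q ^+ k.+1 = q^-1.
  have [->|q_neq0] := eqVneq q 0; first by rewrite !expr0n /= !invr0 mulr0.
  by rewrite exprS invfM mulrCA divff ?mulr1 // expf_neq0.
by rewrite -q_ratio; ring.
Qed.

Theorem corollary3p1 (R : realType) (fX fY : R -> R) (k n l m : nat) :
  lifetime_density fX -> lifetime_density fY ->
  c_ord fX fY -> rhr_le fY fX ->
  (1 <= k <= n)%N -> (1 <= l <= m)%N -> (k <= l)%N -> (m - l <= n - k)%N ->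
  c_ord_hazard (sys_hazard k n fX) (sys_hazard l m fY).
Proof.
move=> hX hY cXY rhr /andP[k_gt0 kn] /andP[l_gt0 lm] kl mlnk.
have [k' [a [ek en]]] : exists k' a, k = k'.+1 /\ n = (k'.+1 + a)%N.
  by exists k.-1, (n - k)%N; lia.
have [l' [b [el em]]] : exists l' b, l = l'.+1 /\ m = (l'.+1 + b)%N.
  by exists l.-1, (m - l)%N; lia.
subst k n l m; rewrite !addKn in mlnk.
pose F := cdf fX; pose G := cdf fY.
pose A : R := ((k'.+1 + a) * 'C(k' + a, k'))%:R.
pose B : R := ((l'.+1 + b) * 'C(l' + b, l'))%:R.
have ratioE z : sys_hazard k'.+1 (k'.+1 + a) fX z / sys_hazard l'.+1 (l'.+1 + b) fY z =
    hazard fX F z / hazard fY G z * (A / B * sys_factor_ratio k' a l' b (F z) (G z)).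
  rewrite !sys_hazardE /sys_factor_ratio -mulf_div; congr (_ * _).
  by rewrite invfM invf_div /A /B; ring.
move=> x y x_ge0 xy; rewrite !ratioE.
have AB_ge0 : 0 <= A / B by rewrite divr_ge0 ?ler0n.
apply: ler_pM.
- by rewrite divr_ge0 ?hazard_ge0.
- by rewrite mulr_ge0 ?sys_factor_ratio_ge0 ?cdf_ge0.
- exact: cXY.
rewrite ler_wpM2l //.
apply: sys_factor_ratio_nondecreasing; rewrite ?cdf_ge0 ?cdf_nondecreasing // => Gx_gt0.
split; first exact: rhr_le_cdf_le.
by rewrite -ler_pdiv_cross ?rhr // (lt_le_trans Gx_gt0) ?cdf_nondecreasing.
Qed.
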